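(* Let $k \ge 1$ be an integer, let $H$ be a graph, and let $x_1,\dots,x_k,y_1,\dots,y_k$ be $2k$ distinct vertices of $H$. If $\tau(H) \ge 4k-3$, then $H$ contains a matching $\{m_1,\dots,m_k\}$ of size $k$ such that $m_i \cap \{x_j,y_j\} = \emptyset$ for all $i \neq j$.
   Context: All graphs are finite and simple. $\tau(H)$ denotes the vertex cover number of $H$ (minimum size of a vertex set meeting every edge of $H$). Edges are regarded as 2-element vertex sets. *)

From mathcomp Require Import all_boot.
Set Implicit Arguments. Unset Strict Implicit. Unset Printing Implicit Defensive.

(* A finite simple graph: vertex type T : finType, adjacency e : rel T,
   symmetric and irreflexive. Edges are 2-element sets {u,v} with e u v. *)
Definition simple_graph (T : finType) (e : rel T) : Prop :=
  symmetric e /\ irreflexive e.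

Definition is_vcover (T : finType) (e : rel T) (C : {set T}) : bool :=
  [forall u, forall v, e u v ==> (u \in C) || (v \in C)].

(* Vertex cover number: minimum size of a vertex cover (setT is always one). *)
Definition tau (T : finType) (e : rel T) : nat :=
  \big[minn/#|T|]_(C : {set T} | is_vcover e C) #|C|.

(* A matching of size k, given as k edges m i = {(m i).1, (m i).2}
   whose 2k endpoints are pairwise distinct. *)
Definition is_matching (T : finType) (e : rel T) (k : nat)
  (m : 'I_k -> T * T) : Prop :=
  (forall i, e (m i).1 (m i).2) /\
  injective (fun p : 'I_k + 'I_k =>
               match p with inl i => (m i).1 | inr i => (m i).2 end).

From mathcomp Require Import all_boot zify.

(* Choose m_1, ..., m_k in turn: when m_i is chosen, it
   must avoid the 2(k-1) vertices x_j, y_j (j <> i) and the at most 2(k-1)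
   endpoints of the previously chosen edges.  These at most 4k-4 < tau(H)
   vertices do not form a vertex cover, so some edge avoids all of them. *)

Set Implicit Arguments.
Unset Strict Implicit.
Unset Printing Implicit Defensive.

Section VertexCover.

Variables (T : finType) (e : rel T).

Lemma tau_le_vcover (C : {set T}) : is_vcover e C -> tau e <= #|C|.
Proof.
move=> coverC; rewrite /tau -big_filter.
have : C \in [seq D <- index_enum {set T} | is_vcover e D].
  by rewrite mem_filter coverC mem_index_enum.
elim: [seq _ <- _ | _] => [|D s IHs] //=.
rewrite big_cons inE => /orP [/eqP <-|/IHs]; first exact: geq_minl.
exact/leq_trans/geq_minr.
Qed.

Lemma edge_outside (F : {set T}) :
  #|F| < tau e -> exists u v, [/\ e u v, u \notin F & v \notin F].
Proof.
move=> ltF; have /forallPn [u /forallPn [v]] : ~~ is_vcover e F.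
  by apply: contraTN ltF => /tau_le_vcover; rewrite -leqNgt.
by rewrite negb_imply negb_or => /andP [uv /andP [uF vF]]; exists u, v.
Qed.

End VertexCover.

Definition ends (T : finType) (p : T * T) : {set T} := [set p.1; p.2].

Lemma card_ends (T : finType) (p : T * T) : #|ends p| <= 2.
Proof. by rewrite cards2; case: (_ != _). Qed.

Lemma disjoint_endsl (T : finType) (p : T * T) (A : {set T}) :
  [disjoint ends p & A] = (p.1 \notin A) && (p.2 \notin A).
Proof. by rewrite disjoints_subset subUset !sub1set !inE. Qed.

Lemma disjoint_neq (T : finType) (A B : {set T}) a b :
  [disjoint A & B] -> a \in A -> b \in B -> a != b.
Proof.
by move=> dAB aA; apply: contraTneq => <-; rewrite (disjointFr dAB aA).
Qed.

Lemma card_bigcup_le (I T : finType) (P : pred I) (F : I -> {set T}) :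
  #|\bigcup_(i | P i) F i| <= \sum_(i | P i) #|F i|.
Proof.
elim/big_rec2: _ => [|i n U _ leUn]; first by rewrite cards0.
by rewrite (leq_trans (leq_card_setU _ _).1) ?leq_add2l.
Qed.

Section Greedy.

Variables (T : finType) (e : rel T) (k : nat) (B : 'I_k -> {set T}).
Hypothesis room : forall i, #|B i| + 2 * k.-1 < tau e.

Definition greedy_upto (n : nat) (m : 'I_k -> T * T) :=
  forall i : 'I_k, i < n ->
  [/\ e (m i).1 (m i).2, [disjoint ends (m i) & B i]
    & forall j : 'I_k, j < i -> [disjoint ends (m i) & ends (m j)]].

Lemma greedy_upto_extend n m :
  n < k -> greedy_upto n m -> exists m', greedy_upto n.+1 m'.
Proof.
move=> ltnk gm; pose i0 := Ordinal ltnk.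
pose S := [set j : 'I_k | j < n].
pose F := B i0 :|: \bigcup_(j in S) ends (m j).
have cardS : #|S| <= k.-1.
  rewrite -[k in k.-1]card_ord -(cardsC1 i0) subset_leq_card //.
  by apply/subsetP => j; rewrite !inE; apply: contraTneq => ->; rewrite ltnn.
have /edge_outside [u [v [uv uF vF]]] : #|F| < tau e.
  apply: leq_ltn_trans (room i0); rewrite (leq_trans (leq_card_setU _ _).1) //.
  rewrite leq_add2l (leq_trans (card_bigcup_le _ _)) //.
  apply: (@leq_trans (\sum_(j in S) 2)).
    by apply: leq_sum => j _; apply: card_ends.
  by rewrite sum_nat_const mulnC leq_mul2l cardS orbT.
have dF : [disjoint ends (u, v) & F] by rewrite disjoint_endsl uF vF.
have neq_i0 (j : 'I_k) : j < n -> (j == i0) = false.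
  by move=> ltj; apply/negbTE/eqP => eji; rewrite eji ltnn in ltj.
exists (fun i => if i == i0 then (u, v) else m i) => i.
rewrite ltnS leq_eqVlt => /orP [/eqP ein | ltin].
  have -> : i = i0 by apply: val_inj.
  rewrite eqxx; split=> // [|j ltj].
    by apply: disjointWr dF; apply: subsetUl.
  rewrite neq_i0 //; apply: disjointWr dF; apply: subset_trans (subsetUr _ _).
  by apply: (bigcup_sup j); rewrite inE.
have [edge_i disjB_i disj_prev] := gm i ltin.
rewrite neq_i0 //; split=> // j ltj.
by rewrite neq_i0 ?disj_prev // (ltn_trans ltj).
Qed.

Lemma greedy_upto_exists n : n <= k -> exists m, greedy_upto n m.
Proof.
(* The empty prefix needs some map 'I_k -> T * T, hence a vertex whenever 'I_k
   is inhabited. *)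
have vertex (i : 'I_k) : exists u : T, true.
  have /edge_outside [u _] : #|@set0 T| < tau e.
    by rewrite cards0 (leq_ltn_trans _ (room i)).
  by exists u.
elim: n => [|n IHn] ltnk.
  by exists (fun i => (xchoose (vertex i), xchoose (vertex i))).
have [m gm] := IHn (ltnW ltnk).
exact: greedy_upto_extend gm.
Qed.

Lemma greedy_disjoint_edges :
  exists m : 'I_k -> T * T,
    [/\ forall i, e (m i).1 (m i).2,
        forall i, [disjoint ends (m i) & B i]
      & forall i j, i != j -> [disjoint ends (m i) & ends (m j)]].
Proof.
have [m gm] := greedy_upto_exists (leqnn k).
exists m; split=> [i|i|i j].
- by have [] := gm i (ltn_ord i).
- by have [] := gm i (ltn_ord i).
case: (ltngtP i j) => [ltij | ltji | /val_inj ->]; last by rewrite eqxx.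
  by have [_ _ /(_ i ltij)] := gm j (ltn_ord j); rewrite disjoint_sym.
by have [_ _ /(_ j ltji)] := gm i (ltn_ord i).
Qed.

End Greedy.

Lemma disjoint_edges_matching (T : finType) (e : rel T) k (m : 'I_k -> T * T) :
  irreflexive e -> (forall i, e (m i).1 (m i).2) ->
  (forall i j, i != j -> [disjoint ends (m i) & ends (m j)]) ->
  is_matching e m.
Proof.
move=> irr edge disj; split=> // [] [i|i] [j|j] /= Emij;
  have [eij | neqij] := eqVneq i j; rewrite ?eij //;
  try by move: (edge i); rewrite Emij eij irr.
all: by move/eqP: Emij; rewrite (negbTE (disjoint_neq (disj _ _ neqij) _ _))
  ?set21 ?set22.
Qed.

Theorem mainTheorem13 (T : finType) (e : rel T) (k : nat)
  (x y : 'I_k -> T) :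
  simple_graph e ->
  1 <= k ->
  injective (fun p : 'I_k + 'I_k =>
               match p with inl i => x i | inr i => y i end) ->
  4 * k - 3 <= tau e ->
  exists m : 'I_k -> T * T,
    is_matching e m /\
    (forall i j : 'I_k, i != j ->
       [/\ (m i).1 != x j, (m i).1 != y j, (m i).2 != x j & (m i).2 != y j]).
Proof.
move=> [_ irr] k_gt0 _ tau_ge.
pose B i := x @: [set~ i] :|: y @: [set~ i].
have room i : #|B i| + 2 * k.-1 < tau e.
  have cardB : #|B i| <= 2 * k.-1.
    have -> : k.-1 = #|[set~ i]| by rewrite cardsC1 card_ord.
    by rewrite (leq_trans (leq_card_setU _ _).1) // mul2n -addnn
      leq_add ?leq_imset_card.
  by apply: leq_trans tau_ge; lia.
have [m [edge disjB disjm]] := greedy_disjoint_edges room.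
exists m; split; first exact: disjoint_edges_matching.
move=> i j neqij; have jCi : j \in [set~ i] by rewrite in_setC1 eq_sym.
have [xjB yjB] : x j \in B i /\ y j \in B i by rewrite !inE !imset_f ?orbT.
by split; apply: disjoint_neq (disjB i) _ _; rewrite ?set21 ?set22 ?xjB ?yjB.
Qed.
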